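(* Let $i\in[n]$ and $M_i=\{\beta\in\Phi^+\mid\beta\ge\alpha_i\}$. If $M_i$ is an abelian ideal, then it is a maximal abelian ideal (with respect to inclusion).
   Context: $\Phi$ is a finite irreducible crystallographic root system with basis $\Pi=\{\alpha_1,\dots,\alpha_n\}$ and positive roots $\Phi^+$. The root poset is $\Phi^+$ with $\beta\ge\gamma$ iff $\beta-\gamma$ is a nonnegative integer combination of simple roots. An abelian ideal is a subset $I\subseteq\Phi^+$ closed upward in the root poset with $(I+I)\cap\Phi=\emptyset$. *)

From mathcomp Require Import all_boot all_order all_algebra.
Set Implicit Arguments. Unset Strict Implicit. Unset Printing Implicit Defensive.
Import Order.TTheory GRing.Theory Num.Theory.
Local Open Scope ring_scope.

Section RootSystems.
Variables (R : realFieldType) (n : nat).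

Definition dotv (u v : 'rV[R]_n) : R := (u *m v^T) 0 0.

Definition cartan_num (b a : 'rV[R]_n) : R := 2 * dotv b a / dotv a a.

Definition reflect_root (a b : 'rV[R]_n) : 'rV[R]_n := b - cartan_num b a *: a.

(* Finite reduced crystallographic root system in the Euclidean space R^n
   (Humphreys' axioms R1--R4): Phi finite (a list), spans, 0 not a root,
   only multiples +-a of a root a are roots, closed under reflections,
   Cartan numbers are integers. *)
Definition is_root_system (Phi : seq 'rV[R]_n) : Prop :=
  [/\ (0 : 'rV[R]_n) \notin Phi,
      (forall v : 'rV[R]_n, exists c : 'rV[R]_n -> R,
          v = \sum_(a <- Phi) c a *: a),
      (forall (a : 'rV[R]_n) (c : R), a \in Phi -> c *: a \in Phi ->
          c = 1 \/ c = -1),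
      (forall a b, a \in Phi -> b \in Phi -> reflect_root a b \in Phi) &
      (forall a b, a \in Phi -> b \in Phi ->
          exists z : int, cartan_num b a = z%:~R) ].

Definition irreducible_rs (Phi : seq 'rV[R]_n) : Prop :=
  forall P : pred 'rV[R]_n,
    (forall a b, a \in Phi -> b \in Phi -> P a -> ~~ P b -> dotv a b = 0) ->
    (forall a, a \in Phi -> P a) \/ (forall a, a \in Phi -> ~~ P a).

Definition is_rs_basis (Phi : seq 'rV[R]_n) (alpha : 'I_n -> 'rV[R]_n) : Prop :=
  [/\ (forall i, alpha i \in Phi),
      (forall c : 'I_n -> R, \sum_i c i *: alpha i = 0 -> forall i, c i = 0) &
      (forall b, b \in Phi -> exists c : 'I_n -> int,
          b = \sum_i (c i)%:~R *: alpha i /\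
          ((forall i, 0 <= c i) \/ (forall i, c i <= 0))) ].

Definition pos_root (Phi : seq 'rV[R]_n) (alpha : 'I_n -> 'rV[R]_n)
    (b : 'rV[R]_n) : Prop :=
  b \in Phi /\ exists c : 'I_n -> nat, b = \sum_i (c i)%:R *: alpha i.

Definition root_le (alpha : 'I_n -> 'rV[R]_n) (g b : 'rV[R]_n) : Prop :=
  exists c : 'I_n -> nat, b - g = \sum_i (c i)%:R *: alpha i.

Definition abelian_ideal (Phi : seq 'rV[R]_n) (alpha : 'I_n -> 'rV[R]_n)
    (I : 'rV[R]_n -> Prop) : Prop :=
  [/\ (forall b, I b -> pos_root Phi alpha b),
      (forall g b, I g -> pos_root Phi alpha b -> root_le alpha g b -> I b) &
      (forall b g, I b -> I g -> b + g \notin Phi) ].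

Definition maximal_abelian_ideal (Phi : seq 'rV[R]_n) (alpha : 'I_n -> 'rV[R]_n)
    (I : 'rV[R]_n -> Prop) : Prop :=
  abelian_ideal Phi alpha I /\
  forall J : 'rV[R]_n -> Prop, abelian_ideal Phi alpha J ->
    (forall b, I b -> J b) -> forall b, J b <-> I b.

Definition M_set (Phi : seq 'rV[R]_n) (alpha : 'I_n -> 'rV[R]_n) (i : 'I_n)
    (b : 'rV[R]_n) : Prop :=
  pos_root Phi alpha b /\ root_le alpha (alpha i) b.

End RootSystems.

(** If some root [b] of an abelian ideal [J] containing [M_i] were outside
    [M_i], its [alpha_i]-coordinate would vanish.  For [g] in [M_i], the sum
    [b + g] is not a root, so [(b, g) >= 0]; the reflection [s_b] preserves
    [M_i] and negates [(b, g)], hence [b] is orthogonal to all of [M_i].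
    By irreducibility no root is orthogonal to [M_i]: the roots orthogonal to
    [M_i] are orthogonal to all other roots, and [alpha_i] itself is not
    orthogonal to [M_i]. *)

From mathcomp Require Import all_boot all_order all_algebra.
From mathcomp Require Import ring lra zify.
From Stdlib Require Import ClassicalDescription Classical.
Set Implicit Arguments. Unset Strict Implicit. Unset Printing Implicit Defensive.
Import Order.TTheory GRing.Theory Num.Theory.
Local Open Scope ring_scope.

Lemma pred_of_prop (T : Type) (Q : T -> Prop) : exists P : pred T, forall x, P x <-> Q x.
Proof.
exists (fun x => if excluded_middle_informative (Q x) then true else false) => x.
by case: excluded_middle_informative.
Qed.

Section InnerProduct.
Variables (R : realFieldType) (n : nat).
Implicit Types (u v w : 'rV[R]_n) (a : R).

Lemma dotvE u v : dotv u v = \sum_j u 0 j * v 0 j.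
Proof. by rewrite /dotv !mxE; apply: eq_bigr => j _; rewrite mxE. Qed.

Lemma dotvC u v : dotv u v = dotv v u.
Proof. by rewrite !dotvE; apply: eq_bigr => j _; rewrite mulrC. Qed.

Lemma dotvDl u w v : dotv (u + w) v = dotv u v + dotv w v.
Proof. by rewrite !dotvE -big_split; apply: eq_bigr => j _; rewrite mxE mulrDl. Qed.

Lemma dotvZl a u v : dotv (a *: u) v = a * dotv u v.
Proof. by rewrite !dotvE mulr_sumr; apply: eq_bigr => j _; rewrite mxE mulrA. Qed.

Lemma dotvNl u v : dotv (- u) v = - dotv u v.
Proof. by rewrite -scaleN1r dotvZl mulN1r. Qed.

Lemma dotvBl u w v : dotv (u - w) v = dotv u v - dotv w v.
Proof. by rewrite dotvDl dotvNl. Qed.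

Lemma dotvZr a u v : dotv v (a *: u) = a * dotv v u.
Proof. by rewrite !(dotvC v) dotvZl. Qed.

Lemma dotvNr u v : dotv v (- u) = - dotv v u.
Proof. by rewrite !(dotvC v) dotvNl. Qed.

Lemma dotvBr u w v : dotv v (u - w) = dotv v u - dotv v w.
Proof. by rewrite !(dotvC v) dotvBl. Qed.

Lemma dotv_ge0 u : 0 <= dotv u u.
Proof. by rewrite dotvE; apply: sumr_ge0 => j _; rewrite -expr2 sqr_ge0. Qed.

Lemma dotv_eq0 u : dotv u u = 0 -> u = 0.
Proof.
rewrite dotvE => /eqP; rewrite psumr_eq0 => [/allP u0|j _]; last first.
  by rewrite -expr2 sqr_ge0.
apply/rowP => j; rewrite mxE; have -> : (0 : 'I_1) = ord0 by apply: val_inj.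
by have := u0 j (mem_index_enum j); rewrite /= -expr2 sqrf_eq0 => /eqP.
Qed.

Lemma dotv_gt0 u : u != 0 -> 0 < dotv u u.
Proof. by move=> u0; rewrite lt_def dotv_ge0 andbT; apply: contra u0 => /eqP/dotv_eq0->. Qed.

(* Equality case of Cauchy-Schwarz: the defect of the projection of [u] on [v] vanishes. *)
Lemma cauchy_schwarz_eq u v : v != 0 ->
  dotv u u * dotv v v <= dotv u v ^+ 2 -> u = (dotv u v / dotv v v) *: v.
Proof.
move=> v0 uv; have vv_gt0 := dotv_gt0 v0; set t := dotv u v / dotv v v.
have defect : dotv (u - t *: v) (u - t *: v) * dotv v v
    = dotv u u * dotv v v - dotv u v ^+ 2.
  rewrite !dotvBl !dotvBr !dotvZl !dotvZr (dotvC v u) /t.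
  by field; rewrite gt_eqF.
apply/eqP; rewrite -subr_eq0; apply/eqP/dotv_eq0/eqP.
by rewrite eq_le dotv_ge0 andbT -(pmulr_lle0 _ vv_gt0) defect subr_le0.
Qed.

Lemma cartan_numE u v : v != 0 -> cartan_num u v * dotv v v = 2 * dotv u v.
Proof. by move=> v0; rewrite /cartan_num mulfVK // gt_eqF // dotv_gt0. Qed.

Lemma dotv_reflect_root_self u v : u != 0 ->
  dotv u (reflect_root u v) = - dotv u v.
Proof.
move=> u0; rewrite /reflect_root dotvBr dotvZr cartan_numE //.
by rewrite (dotvC v u); ring.
Qed.

Lemma reflect_root_cartanN1 u v : cartan_num v u = -1 -> reflect_root u v = v + u.
Proof. by rewrite /reflect_root => ->; rewrite scaleN1r opprK. Qed.

End InnerProduct.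

Section RootSystem.
Variables (R : realFieldType) (n : nat) (Phi : seq 'rV[R]_n).
Hypothesis Phi_rs : is_root_system Phi.

Lemma root_neq0 a : a \in Phi -> a != 0.
Proof. by case: Phi_rs => Phi0 _ _ _ _ aP; apply: contraNneq Phi0 => <-. Qed.

Lemma rootN a : a \in Phi -> - a \in Phi.
Proof.
move=> aP; have [_ _ _ Phi_refl _] := Phi_rs; have := Phi_refl a a aP aP.
rewrite /reflect_root /cartan_num mulfK ?gt_eqF ?dotv_gt0 ?root_neq0 //.
by rewrite scaler_nat mulr2n opprD addrA subrr sub0r.
Qed.

Lemma cartan_num_le_m2 a b : a \in Phi -> b \in Phi -> dotv a b < 0 ->
  cartan_num a b != -1 -> cartan_num a b <= -2.
Proof.
move=> aP bP ab_lt0; have [_ _ _ _ Phi_int] := Phi_rs.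
have [z zE] := Phi_int b a bP aP; rewrite zE -[-1]/((-1 : int)%:~R) eqr_int.
have z_lt0 : z < 0.
  rewrite -(ltrz0 R) -zE -(pmulr_rlt0 _ (dotv_gt0 (root_neq0 bP))).
  by rewrite mulrC cartan_numE ?root_neq0 // pmulr_rlt0.
by move=> zN1; rewrite -[-2]/((-2 : int)%:~R) ler_int; lia.
Qed.

(* Two roots with an obtuse angle are either opposite or add up to a root:
   otherwise both Cartan numbers are at most [-2], which forces equality in
   Cauchy-Schwarz, and in a reduced root system proportional roots are [+-]. *)
Lemma root_add_of_dot_lt0 a b : a \in Phi -> b \in Phi -> dotv a b < 0 ->
  a + b != 0 -> a + b \in Phi.
Proof.
move=> aP bP ab_lt0 ab_neq0; have [_ _ Phi_red Phi_refl _] := Phi_rs.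
have [a0 b0] := (root_neq0 aP, root_neq0 bP).
have [aa_gt0 bb_gt0] := (dotv_gt0 a0, dotv_gt0 b0).
have ba_lt0 : dotv b a < 0 by rewrite dotvC.
have [z1N1|z1_neq] := eqVneq (cartan_num a b) (-1).
  by rewrite -reflect_root_cartanN1 //; apply: Phi_refl.
have [z2N1|z2_neq] := eqVneq (cartan_num b a) (-1).
  by rewrite addrC -reflect_root_cartanN1 //; apply: Phi_refl.
have z1_le := cartan_num_le_m2 aP bP ab_lt0 z1_neq.
have z2_le := cartan_num_le_m2 bP aP ba_lt0 z2_neq.
have ab_le : dotv a b <= - dotv b b.
  by have := cartan_numE a b0; nra.
have ab_le' : dotv a b <= - dotv a a.
  by have := cartan_numE b a0; rewrite (dotvC b a); nra.
have aE : a = (dotv a b / dotv b b) *: b by apply: cauchy_schwarz_eq => //; nra.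
have [t1|tN1] : dotv a b / dotv b b = 1 \/ dotv a b / dotv b b = -1.
- by apply: Phi_red bP _; rewrite -aE.
- by move: ab_lt0; rewrite aE t1 scale1r ltNge dotv_ge0.
- by move: ab_neq0; rewrite aE tN1 scaleN1r addNr eqxx.
Qed.

End RootSystem.

Section Coordinates.
Variables (R : realFieldType) (n : nat) (alpha : 'I_n -> 'rV[R]_n).

Lemma coord_uniq :
  (forall c : 'I_n -> R, \sum_k c k *: alpha k = 0 -> forall k, c k = 0) ->
  forall x y : 'I_n -> R, \sum_k x k *: alpha k = \sum_k y k *: alpha k ->
  forall k, x k = y k.
Proof.
move=> alpha_free x y xy k; apply/eqP; rewrite -subr_eq0; apply/eqP.
apply: (alpha_free (fun k => x k - y k)).
by under eq_bigr do rewrite scalerBl; rewrite sumrB xy subrr.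
Qed.

Lemma sum_scale_delta i : \sum_k ((k == i)%:R : R) *: alpha k = alpha i.
Proof.
rewrite (bigD1 i) //= eqxx scale1r big1 ?addr0 // => k /negbTE ->.
by rewrite scale0r.
Qed.

Definition avoids (i : 'I_n) (b : 'rV[R]_n) : Prop :=
  exists c : 'I_n -> R, b = \sum_k c k *: alpha k /\ c i = 0.

Lemma reflect_rootE a b (xa xb : 'I_n -> R) :
  a = \sum_k xa k *: alpha k -> b = \sum_k xb k *: alpha k ->
  reflect_root a b = \sum_k (xb k - cartan_num b a * xa k) *: alpha k.
Proof.
move=> -> ->; rewrite /reflect_root scaler_sumr -sumrB.
by apply: eq_bigr => k _; rewrite scalerBl scalerA.
Qed.

End Coordinates.

Section SimpleRootSubset.
Variables (R : realFieldType) (n : nat) (Phi : seq 'rV[R]_n).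
Variables (alpha : 'I_n -> 'rV[R]_n) (i : 'I_n).
Hypotheses (Phi_rs : is_root_system Phi) (alpha_basis : is_rs_basis Phi alpha).

Local Notation M := (M_set Phi alpha i).

Lemma M_setP z :
  M z <-> z \in Phi /\ exists x : 'I_n -> R, z = \sum_k x k *: alpha k /\ 1 <= x i.
Proof.
have [_ alpha_free alpha_sign] := alpha_basis; split.
  case=> [[zP _] [d dE]]; split=> //.
  exists (fun k => (d k)%:R + (k == i)%:R); split; last by rewrite eqxx lerDr.
  by under eq_bigr do rewrite scalerDl; rewrite big_split /= -dE sum_scale_delta subrK.
case=> zP [x [zE xi]]; have [c [cE c_sign]] := alpha_sign z zP.
move: xi; rewrite (coord_uniq alpha_free (etrans (esym zE) cE)) ler1z => ci.
case: c_sign => c_sign; last by have := c_sign i; lia.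
split; first split=> //.
  by exists (fun k => `|c k|%N); rewrite cE; apply: eq_bigr => k _; rewrite natr_absz ger0_norm.
exists (fun k => `|c k - (k == i)%:Z|%N).
rewrite cE -(sum_scale_delta alpha i) -sumrB; apply: eq_bigr => k _.
rewrite -scalerBl natr_absz ger0_norm ?intrB //.
by have := c_sign k; case: eqP => [->|]; lia.
Qed.

Lemma M_set_root z : M z -> z \in Phi.
Proof. by case=> [[]]. Qed.

Lemma M_set_simple : M (alpha i).
Proof.
have [alphaP _ _] := alpha_basis; apply/M_setP; split=> //.
by exists (fun k => (k == i)%:R); rewrite sum_scale_delta eqxx.
Qed.

Lemma pos_root_avoids b : pos_root Phi alpha b -> ~ M b -> avoids alpha i b.
Proof.
case=> bP [e eE] bM; exists (fun k => (e k)%:R); split=> //.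
have [->|ei] := eqVneq (e i) 0%N; first by [].
by case: bM; apply/M_setP; split=> //; exists (fun k => (e k)%:R); rewrite ler1n lt0n.
Qed.

Lemma root_avoidsVM y : y \in Phi -> [\/ avoids alpha i y, M y | M (- y)].
Proof.
move=> yP; have [_ _ alpha_sign] := alpha_basis.
have [c [yE c_sign]] := alpha_sign y yP.
have [ci|ci] := eqVneq (c i) 0; first by apply: Or31; exists (fun k => (c k)%:~R); rewrite ci.
case: c_sign => c_sign.
  apply: Or32; apply/M_setP; split=> //; exists (fun k => (c k)%:~R); split=> //.
  by rewrite ler1z; have := c_sign i; lia.
apply: Or33; apply/M_setP; split; first exact: rootN.
exists (fun k => - (c k)%:~R); split.
  by rewrite yE -sumrN; apply: eq_bigr => k _; rewrite scaleNr.
by rewrite -intrN ler1z; have := c_sign i; lia.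
Qed.

Lemma M_set_reflect y g : y \in Phi -> avoids alpha i y -> M g ->
  M (reflect_root y g).
Proof.
have [_ _ _ Phi_refl _] := Phi_rs.
move=> yP [c [yE ci]] /M_setP[gP [x [gE xi]]]; apply/M_setP; split; first exact: Phi_refl.
by exists (fun k => x k - cartan_num g y * c k); rewrite (reflect_rootE yE gE) ci mulr0 subr0.
Qed.

Lemma avoids_add_neq0 b g : avoids alpha i b -> M g -> b + g != 0.
Proof.
have [_ alpha_free _] := alpha_basis.
move=> [c [bE ci]] /M_setP[_ [x [gE xi]]]; apply/eqP => bg0.
have sum0 : \sum_k (c k + x k) *: alpha k = 0.
  by under eq_bigr do rewrite scalerDl; rewrite big_split /= -bE -gE.
by move: xi; have := alpha_free _ sum0 i; rewrite ci add0r => ->; rewrite ler10.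
Qed.

(* [(b, g) >= 0] on [M], and [s_b] maps [M] to itself while negating [(b, g)]. *)
Lemma avoids_orthogonal b : b \in Phi -> avoids alpha i b ->
  (forall g, M g -> b + g \notin Phi) -> forall g, M g -> dotv b g = 0.
Proof.
move=> bP bi b_abelian.
have dot_ge0 g : M g -> 0 <= dotv b g.
  move=> Mg; rewrite leNgt; apply/negP => bg_lt0.
  by move/negP: (b_abelian g Mg); apply; apply: root_add_of_dot_lt0;
    rewrite ?(M_set_root Mg) ?avoids_add_neq0.
move=> g Mg; have := dot_ge0 _ (M_set_reflect bP bi Mg).
rewrite dotv_reflect_root_self ?(root_neq0 Phi_rs) // oppr_ge0 => bg_le0.
by apply/eqP; rewrite eq_le bg_le0 dot_ge0.
Qed.

Hypothesis Phi_irr : irreducible_rs Phi.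

(* The roots orthogonal to [M] are orthogonal to every other root, so by
   irreducibility they are all roots or none; [alpha_i] rules out the former. *)
Lemma no_root_orthogonal b : b \in Phi -> ~ (forall g, M g -> dotv b g = 0).
Proof.
move=> bP b_orth.
have [P PE] := pred_of_prop (fun x => forall g, M g -> dotv x g = 0).
case: (Phi_irr (P := P)).
- move=> a y aP yP /PE a_orth /negP y_north.
  case: (root_avoidsVM yP) => [yi|My|MNy].
  + apply/eqP/negPn/negP => ay_neq0; apply: y_north; apply/PE => g Mg.
    have := a_orth _ (M_set_reflect yP yi Mg).
    rewrite /reflect_root dotvBr dotvZr a_orth // sub0r => /eqP.
    rewrite oppr_eq0 mulf_eq0 (negPf ay_neq0) orbF => /eqP cgy0.
    have := cartan_numE g (root_neq0 Phi_rs yP).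
    by rewrite cgy0 mul0r dotvC => /esym/eqP; rewrite mulf_eq0 pnatr_eq0 => /eqP.
  + exact: a_orth.
  + by apply/eqP; rewrite -oppr_eq0 -dotvNr a_orth.
- have [alphaP _ _] := alpha_basis.
  move=> /(_ _ (alphaP i))/PE/(_ _ M_set_simple)/dotv_eq0 alpha_i0.
  by move: (root_neq0 Phi_rs (alphaP i)); rewrite alpha_i0 eqxx.
- by move=> /(_ _ bP)/negP; apply; apply/PE.
Qed.

End SimpleRootSubset.

Theorem lemma5p2 (R : realFieldType) (n : nat) (Phi : seq 'rV[R]_n)
    (alpha : 'I_n -> 'rV[R]_n) (i : 'I_n) :
  is_root_system Phi -> irreducible_rs Phi -> is_rs_basis Phi alpha ->
  abelian_ideal Phi alpha (M_set Phi alpha i) ->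
  maximal_abelian_ideal Phi alpha (M_set Phi alpha i).
Proof.
move=> Phi_rs Phi_irr alpha_basis M_abelian.
split=> [//|J [J_pos _ J_abelian] MJ b]; split=> [Jb|/MJ//].
apply: NNPP => bM; have [bP _] := J_pos b Jb.
apply: (no_root_orthogonal Phi_rs alpha_basis Phi_irr bP).
apply: (avoids_orthogonal Phi_rs alpha_basis bP).
  exact: pos_root_avoids (J_pos b Jb) bM.
by move=> g Mg; apply: J_abelian Jb (MJ g Mg).
Qed.
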